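(* For all $m\geq 1$ and $n\in\mathbb N$, \[ s_{n,m}(122,123)=\frac{1}{mn+1}\binom{(m+1)n}{n}. \]
   Context: $[n]_m=\{1^m,\ldots,n^m\}$; a permutation of $[n]_m$ is a sequence of length $nm$ in which each element of $[n]$ appears exactly $m$ times (for $n=0$ only the empty sequence). A sequence avoids a pattern $\pi$ if it has no subsequence order-isomorphic to $\pi$ (same relative order and same equalities among entries). $s_{n,m}(\Pi)$ is the number of permutations of $[n]_m$ avoiding all patterns in $\Pi$. *)

From mathcomp Require Import all_boot.
Set Implicit Arguments. Unset Strict Implicit. Unset Printing Implicit Defensive.

Definition order_iso (w p : seq nat) : bool :=
  (size w == size p) &&
  [forall i : 'I_(size p), forall j : 'I_(size p),
     ((nth 0 w i < nth 0 w j) == (nth 0 p i < nth 0 p j)) &&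
     ((nth 0 w i == nth 0 w j) == (nth 0 p i == nth 0 p j))].

Definition contains (s p : seq nat) : bool :=
  [exists b : (size s).-tuple bool, order_iso (mask b s) p].

Definition avoids_all (Pi : seq (seq nat)) (s : seq nat) : bool :=
  all (fun p => ~~ contains s p) Pi.

(* [s] is a permutation of the multiset [n]_m = {1^m, ..., n^m}. *)
Definition is_multiperm (n m : nat) (s : seq nat) : bool :=
  (size s == n * m) && all (fun x => 0 < x <= n) s &&
  all (fun i => count_mem i s == m) (iota 1 n).

(* s_{n,m}(Pi): every permutation of [n]_m is the image of a unique
   (n*m)-tuple over 'I_n under i |-> i+1; we count those tuples. *)
Definition s_nm (n m : nat) (Pi : seq (seq nat)) : nat :=
  #|[set t : (n * m).-tuple 'I_n |
      let s := [seq (val i).+1 | i <- t] in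
      is_multiperm n m s && avoids_all Pi s]|.

From mathcomp Require Import all_boot zify.
Set Implicit Arguments. Unset Strict Implicit. Unset Printing Implicit Defensive.

(* A word avoids both 122 and 123 iff it has no subsequence a < b <= c.  In
   such a word over [n+1]_m, every copy of the largest letter N = n+1 except
   the last one precedes all smaller letters (a < N <= N is forbidden), and
   the smaller letters before the last N are nonincreasing (a < b <= N is
   forbidden).  So each avoider over [n+1]_m is, uniquely,
       N^(m-1) ++ take t w ++ N :: drop t w
   for an avoider w over [n]_m and a t bounded by the length p of the longest
   nonincreasing prefix of w; the new word has such a prefix of length m + p
   (t = 0) or m - 1 + t (t > 0).  Avoiders thus form a generating tree where
   a node labelled p has children labelled m, m+1, ..., m+p, and s_{n,m} is
   the number of its nodes at depth n. *)

Fixpoint tree_count (m k p : nat) : nat :=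
  if k is k'.+1 then \sum_(j <- iota 0 p.+1) tree_count m k' (m + j) else 1.

Lemma tree_countS m k p :
  tree_count m k.+1 p.+1 = tree_count m k.+1 p + tree_count m k (m + p.+1).
Proof.
rewrite /tree_count -/tree_count.
have -> : iota 0 p.+2 = iota 0 p.+1 ++ [:: p.+1] by rewrite -addn1 iotaD.
by rewrite big_cat big_seq1.
Qed.

Lemma tree_count0 m k : tree_count m k.+1 0 = tree_count m k m.
Proof. by rewrite /= big_seq1 addn0. Qed.

Lemma mul_bin_shift m k :
  'C(k.+1 * m.+1 + m, k.+2) = m * 'C(k.+1 * m.+1 + m, k.+1).
Proof.
have := mul_bin_left (k.+1 * m.+1 + m) k.+1.
have -> : k.+1 * m.+1 + m - k.+1 = k.+2 * m by rewrite !mulSn mulnS; lia.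
by rewrite -mulnA => /eqP; rewrite eqn_mul2l /= => /eqP.
Qed.

Lemma tree_count_closed m k p :
  tree_count m k.+1 p + m * 'C(k.+1 * m.+1 + p, k) = 'C(k.+1 * m.+1 + p, k.+1).
Proof.
elim: k p => [|k IH] p.
  by rewrite /= bin0 bin1 muln1 mul1n sum1_size /= size_iota; lia.
elim: p => [|p IHp].
  rewrite tree_count0 !addn0.
  have := IH m; set Y := k.+1 * m.+1 + m.
  have -> : k.+2 * m.+1 = Y.+1 by rewrite /Y mulSn; lia.
  rewrite (binS Y k.+1) (binS Y k) mul_bin_shift -/Y mulnDr; lia.
rewrite tree_countS.
have := IH (m + p.+1).
have -> : k.+1 * m.+1 + (m + p.+1) = k.+2 * m.+1 + p by rewrite (mulSn k.+1); lia.
have -> : k.+2 * m.+1 + p.+1 = (k.+2 * m.+1 + p).+1 by lia.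
move: IHp; set Z := k.+2 * m.+1 + p.
by rewrite (binS Z k.+1) (binS Z k) mulnDr; lia.
Qed.

Lemma tree_count_root m n : (m * n + 1) * tree_count m n 0 = 'C((m + 1) * n, n).
Proof.
case: n => [|k]; first by rewrite muln0 bin0.
have hsum := tree_count_closed m k 0.
have hmul := mul_bin_left (k.+1 * m.+1 + 0) k.
rewrite addn0 in hsum hmul.
have -> : (m + 1) * k.+1 = k.+1 * m.+1 by rewrite addn1 mulnC.
have e : k.+1 * m.+1 - k = m * k.+1 + 1 by rewrite mulnC mulnS; lia.
rewrite e -hsum in hmul; rewrite -hsum.
nia.
Qed.

Fixpoint rise_above (x : nat) (s : seq nat) : bool :=
  if s is b :: s' then (x < b) && has (fun c => b <= c) s' || rise_above x s'
  else false.

Fixpoint has_lt_le (s : seq nat) : bool :=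
  if s is x :: s' then rise_above x s' || has_lt_le s' else false.

Lemma containsP s p :
  reflect (exists2 w, subseq w s & order_iso w p) (contains s p).
Proof.
apply: (iffP existsP) => [[b hb]|[w hw hiso]].
  by exists (mask b s) => //; apply: mask_subseq.
case/subseqP: hw => mk hsz e.
by exists (@Tuple (size s) bool mk (introT eqP hsz)); rewrite /= -e.
Qed.

Lemma rise_aboveP x s :
  reflect (exists b c, [/\ x < b, b <= c & subseq [:: b; c] s]) (rise_above x s).
Proof.
elim: s => [|y s IH] /=; first by constructor => [[b [c [_ _]]]].
apply: (iffP orP) => [[/andP [hxy /hasP [c hc hyc]] | /IH [b [c [h1 h2 h3]]]]
                     | [b [c [h1 h2]]]].
- by exists y, c; split => //=; rewrite eqxx sub1seq.
- by exists b, c; split => //; exact: subseq_trans h3 (subseq_cons s y).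
- rewrite /=; case: eqP => [<-|_] h3.
    by left; rewrite h1 /=; apply/hasP; exists c => //; rewrite -sub1seq.
  by right; apply/IH; exists b, c.
Qed.

Lemma has_lt_leP s :
  reflect (exists a b c, [/\ a < b, b <= c & subseq [:: a; b; c] s]) (has_lt_le s).
Proof.
elim: s => [|y s IH] /=; first by constructor => [[a [b [c [_ _]]]]].
apply: (iffP orP) => [[/rise_aboveP [b [c [h1 h2 h3]]] | /IH [a [b [c [h1 h2 h3]]]]]
                     | [a [b [c [h1 h2]]]]].
- by exists y, b, c; split => //=; rewrite eqxx.
- by exists a, b, c; split => //; exact: subseq_trans h3 (subseq_cons s y).
- rewrite /=; case: eqP => [<-|_] h3.
    by left; apply/rise_aboveP; exists b, c.
  by right; apply/IH; exists a, b, c.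
Qed.

Lemma order_iso3 w p0 p1 p2 : order_iso w [:: p0; p1; p2] ->
  exists a b c, [/\ w = [:: a; b; c], (a < b) = (p0 < p1), (b < c) = (p1 < p2)
                  & (b == c) = (p1 == p2)].
Proof.
case/andP => hs /forallP h.
case: w hs h => [|a [|b [|c [|d w]]]] //= _ h.
have cmp (i j : 'I_3) := forallP (h i) j.
exists a, b, c; split.
- by [].
- by case/andP: (cmp (@Ordinal 3 0 isT) (@Ordinal 3 1 isT)) => /eqP.
- by case/andP: (cmp (@Ordinal 3 1 isT) (@Ordinal 3 2 isT)) => /eqP.
- by case/andP: (cmp (@Ordinal 3 1 isT) (@Ordinal 3 2 isT)) => _ /eqP.
Qed.

Lemma avoids_122_123 s :
  avoids_all [:: [:: 1; 2; 2]; [:: 1; 2; 3]] s = ~~ has_lt_le s.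
Proof.
rewrite /avoids_all /= andbT -negb_or; congr (~~ _); apply/idP/idP.
  case/orP => /containsP [w hsub /order_iso3 [a [b [c [ew h1 h2 h3]]]]]; subst w;
    by apply/has_lt_leP; exists a, b, c; split => //; rewrite ?h1 // leq_eqVlt h2 h3.
case/has_lt_leP => a [b [c [hab hbc hsub]]].
have hac := leq_trans hab hbc.
have hba : b < a = false by rewrite ltnNge ltnW.
have hca : c < a = false by rewrite ltnNge ltnW.
have hcb : c < b = false by rewrite ltnNge hbc.
have [hab1 hac1] := (ltn_eqF hab, ltn_eqF hac).
have [hab2 hac2] : (b == a) = false /\ (c == a) = false by rewrite !(eq_sym _ a).
move: hbc; rewrite leq_eqVlt => /orP [/eqP ebc|hbc]; apply/orP.
  subst c; left; apply/containsP; exists [:: a; b; b] => //.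
  apply/andP; split => //; apply/forallP => i; apply/forallP => j.
  by case: i j => [[|[|[|i]]] hi] [[|[|[|j]]] hj] //=;
    rewrite ?ltnn ?eqxx ?hab ?hba ?hab1 ?hab2.
have hbc1 := ltn_eqF hbc.
have hbc2 : (c == b) = false by rewrite eq_sym.
right; apply/containsP; exists [:: a; b; c] => //.
apply/andP; split => //; apply/forallP => i; apply/forallP => j.
by case: i j => [[|[|[|i]]] hi] [[|[|[|j]]] hj] //=;
  rewrite ?ltnn ?eqxx ?hab ?hba ?hab1 ?hab2 ?hbc ?hcb ?hbc1 ?hbc2 ?hac ?hca ?hac1 ?hac2.
Qed.

Fixpoint nonincr (s : seq nat) : bool :=
  if s is x :: s' then all (fun y => y <= x) s' && nonincr s' else true.

Fixpoint nonincr_prefix_le (x : nat) (s : seq nat) : nat :=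
  if s is y :: s' then (if y <= x then (nonincr_prefix_le y s').+1 else 0) else 0.

(* Length of the longest nonincreasing prefix of s: the label of s in the
   generating tree. *)
Definition nonincr_prefix (s : seq nat) : nat :=
  if s is y :: s' then (nonincr_prefix_le y s').+1 else 0.

Lemma nonincr_prefix_leP x s t : t <= size s ->
  (all (fun y => y <= x) (take t s) && nonincr (take t s)) = (t <= nonincr_prefix_le x s).
Proof.
elim: s x t => [|y s IH] x [|t] //=; rewrite ltnS => ht.
case: ifP => hyx //=.
rewrite ltnS -IH // andbA; congr (_ && _).
apply/idP/idP => [/andP[_ ->] //|h]; rewrite h andbT.
by apply/allP => z /(allP h) /leq_trans; apply.
Qed.

Lemma nonincr_prefixP s t : t <= size s -> nonincr (take t s) = (t <= nonincr_prefix s).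
Proof. by case: s t => [|y s] [|t] //= ht; rewrite ltnS -nonincr_prefix_leP. Qed.

Lemma nonincr_prefix_le_size x s : nonincr_prefix_le x s <= size s.
Proof. by elim: s x => //= y s IH x; case: ifP => // _; rewrite ltnS IH. Qed.

Lemma nonincr_prefix_size s : nonincr_prefix s <= size s.
Proof. by case: s => //= y s; rewrite ltnS nonincr_prefix_le_size. Qed.

Lemma nonincr_prefix_bounded x s :
  all (fun y => y <= x) s -> nonincr_prefix s = nonincr_prefix_le x s.
Proof. by case: s => //= y s /andP [-> _]. Qed.

Lemma nonincr_prefix_le_nseq N k r :
  nonincr_prefix_le N (nseq k N ++ r) = k + nonincr_prefix_le N r.
Proof. by elim: k => //= k ->; rewrite leqnn. Qed.

Lemma nonincr_prefix_le_cut x z u v :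
  all (fun y => y <= x) u -> nonincr u -> x < z ->
  nonincr_prefix_le x (u ++ z :: v) = size u.
Proof.
elim: u x => [|y u IH] x /=; first by move=> _ _ hxz; rewrite leqNgt hxz.
move=> /andP [hyx hu] /andP [hau hnu] hxz.
by rewrite hyx IH // (leq_ltn_trans hyx).
Qed.

Lemma rise_above_bounded N v : all (fun y => y <= N) v -> rise_above N v = false.
Proof. by elim: v => //= b v IH /andP[hb hv]; rewrite IH // orbF ltnNge hb. Qed.

Lemma has_lt_le_nseq k N u :
  all (fun y => y <= N) u -> has_lt_le (nseq k N ++ u) = has_lt_le u.
Proof.
move=> hu; elim: k => //= k ->; rewrite rise_above_bounded //.
by rewrite all_cat hu andbT; apply/allP => y /nseqP [-> _].
Qed.

Lemma rise_above_cut x N u v : x < N -> all (fun y => y < N) (u ++ v) ->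
  rise_above x (u ++ N :: v) = rise_above x (u ++ v) || ~~ all (fun y => y <= x) u.
Proof.
move=> hx; elim: u => [|b u IH] /=.
  move=> hv; rewrite orbF hx /=.
  suff -> : has (fun c => N <= c) v = false by [].
  by apply/hasPn => c /(allP hv) /=; rewrite -ltnNge.
move=> /andP [hb hu]; rewrite IH // has_cat /= (ltnW hb) orbT andbT negb_and -ltnNge.
by case: (x < b); rewrite /= ?orbT ?orbF //; case: (rise_above _ _); case: (all _ _).
Qed.

Lemma has_lt_le_cut N u v : all (fun y => y < N) (u ++ v) ->
  has_lt_le (u ++ N :: v) = has_lt_le (u ++ v) || ~~ nonincr u.
Proof.
elim: u => [|x u IH] /=.
  by move=> hv; rewrite orbF rise_above_bounded //; apply/allP => y /(allP hv) /ltnW.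
move=> /andP [hx hu]; rewrite rise_above_cut // IH // negb_and.
by case: (rise_above _ _); case: (has_lt_le _); case: (all _ _); case: (nonincr _).
Qed.

Lemma rise_above_repeat x y s : x < y -> 1 < count_mem y s -> rise_above x s.
Proof.
move=> hxy; elim: s => //= z s IH.
case: eqP => [->|_] /= hc; last by rewrite IH ?orbT.
rewrite hxy /=; apply/orP; left; apply/hasP; exists y => //.
by rewrite -has_pred1 has_count; move: hc; rewrite add1n ltnS.
Qed.

Definition avoider (n m : nat) (s : seq nat) : bool :=
  is_multiperm n m s && ~~ has_lt_le s.

Lemma avoider_bounded n m s : avoider n m s -> all (fun x => 0 < x <= n) s.
Proof. by case/andP => /andP [/andP [_ ->] _] _. Qed.

Definition insert_max (n m : nat) (w : seq nat) (t : nat) : seq nat :=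
  nseq m.-1 n.+1 ++ take t w ++ n.+1 :: drop t w.

Lemma count_insert_max (a : pred nat) n m w t : 0 < m ->
  count a (insert_max n m w t) = count a w + a n.+1 * m.
Proof.
move=> hm; rewrite /insert_max !count_cat count_nseq /=.
rewrite -[in RHS](cat_take_drop t w) count_cat.
by case: (a n.+1) => /=; lia.
Qed.

Lemma all_insert_max (a : pred nat) n m w t : 0 < m ->
  all a (insert_max n m w t) = all a w && a n.+1.
Proof.
move=> hm; rewrite /insert_max !all_cat all_nseq /=.
rewrite -[in RHS](cat_take_drop t w) all_cat.
by case: (a n.+1); case: (m.-1 == 0); case: (all a (take t w)); case: (all a (drop t w)).
Qed.

Lemma insert_max_multiperm n m w t : 0 < m -> all (fun x => 0 < x <= n) w ->
  is_multiperm n.+1 m (insert_max n m w t) = is_multiperm n m w.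
Proof.
move=> hm hw; rewrite /is_multiperm.
have -> : iota 1 n.+1 = iota 1 n ++ [:: n.+1] by rewrite -(addn1 n) iotaD addnC.
have hw' : all (fun x => 0 < x <= n.+1) w.
  by apply/allP => y /(allP hw) /andP [-> h]; apply: leqW.
have hN : count_mem n.+1 w = 0.
  by apply/count_memPn/negP => /(allP hw); rewrite ltnn andbF.
rewrite -!count_predT count_insert_max // count_predT mul1n all_insert_max //.
rewrite hw hw' leqnn all_cat /= count_insert_max // hN /= eqxx mul1n eqxx !andbT.
have -> : (size w + m == n.+1 * m) = (size w == n * m) by rewrite mulSn addnC eqn_add2l.
congr (_ && _); apply: eq_in_all => i; rewrite mem_iota => /andP [_ hi].
by rewrite count_insert_max //= (gtn_eqF hi) addn0.
Qed.

(* The only new a < b <= c are those ending at the last inserted n+1. *)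
Lemma insert_max_lt_le n m w t : all (fun x => x <= n) w -> t <= size w ->
  has_lt_le (insert_max n m w t) = has_lt_le w || ~~ (t <= nonincr_prefix w).
Proof.
move=> hw ht.
have hle : all (fun y => y <= n.+1) (take t w ++ n.+1 :: drop t w).
  rewrite all_cat /= leqnn -all_cat cat_take_drop.
  by apply/allP => y /(allP hw) /leqW.
rewrite /insert_max has_lt_le_nseq // has_lt_le_cut; last first.
  by rewrite cat_take_drop; apply/allP => y /(allP hw).
by rewrite cat_take_drop nonincr_prefixP.
Qed.

Lemma insert_max_avoider n m w t : 0 < m -> all (fun x => 0 < x <= n) w -> t <= size w ->
  avoider n.+1 m (insert_max n m w t) = avoider n m w && (t <= nonincr_prefix w).
Proof.
move=> hm hw ht; have hw' : all (fun x => x <= n) w by apply/allP => y /(allP hw) /andP [].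
rewrite /avoider insert_max_multiperm // insert_max_lt_le // negb_or negbK.
by rewrite andbA.
Qed.

Lemma split_last (N : nat) s : N \in s -> exists a v, s = a ++ N :: v /\ N \notin v.
Proof.
elim: s => // x s IH; rewrite inE; case hs: (N \in s).
  by move=> _; have [a [v [-> hv]]] := IH hs; exists (x :: a), v.
by rewrite orbF => /eqP <-; exists [::], s; rewrite hs.
Qed.

Lemma split_leading (N : nat) s : exists k r, s = nseq k N ++ r /\ N \notin take 1 r.
Proof.
elim: s => [|x s [k [r [-> hr]]]]; first by exists 0, [::].
case: (eqVneq x N) => [->|hx]; first by exists k.+1, r.
by exists 0, (x :: nseq k N ++ r); split => //; rewrite take_cons take0 mem_seq1 eq_sym.
Qed.

Lemma avoider_decomp n m s : 0 < m -> avoider n.+1 m s ->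
  exists w t, [/\ all (fun x => 0 < x <= n) w, t <= size w & s = insert_max n m w t].
Proof.
move=> hm /andP [/andP [/andP [_ hall] hcnt] hpat]; set N := n.+1.
have hN : count_mem N s = m.
  by apply/eqP/(allP hcnt); rewrite mem_iota leqnn.
clear hcnt.
have [a [v [es hv]]] : exists a v, s = a ++ N :: v /\ N \notin v.
  by apply: split_last; rewrite -has_pred1 has_count hN.
have [k [r [ea hr]]] := split_leading N a; subst s a.
(* r has no N: its head x < N would start x < N <= N with the last N. *)
have hrN : N \notin r.
  case: r hr hall hpat hN => [|x r'] //; rewrite take_cons take0 mem_seq1 => hxN.
  rewrite -catA all_cat => /andP [_ hall] hpat _.
  have hle : all (fun y => y <= N) ((x :: r') ++ N :: v).
    by apply/allP => y /(allP hall) /andP [].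
  have hx : x < N by rewrite ltn_neqAle eq_sym hxN; case/andP: hle.
  apply/negP; rewrite inE (negbTE hxN) /= => hr'.
  move: hpat; rewrite has_lt_le_nseq //=.
  rewrite (rise_above_repeat hx) // count_cat /= eqxx.
  rewrite add1n addnS ltnS (leq_trans _ (leq_addr _ _)) //.
  by rewrite -has_count has_pred1.
have hk : k = m.-1.
  move: hN; rewrite !count_cat count_nseq /= eqxx mul1n.
  by rewrite (count_memPn hrN) (count_memPn hv); lia.
exists (r ++ v), (size r); split.
- apply/allP => y hy.
  have hyN : y != N by apply: contraTneq hy => ->; rewrite mem_cat negb_or hrN.
  have /andP [-> hyle] : 0 < y <= N.
    by apply: (allP hall); move: hy; rewrite !mem_cat inE => /orP [] ->; rewrite ?orbT.
  by rewrite -ltnS ltn_neqAle hyN.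
- by rewrite size_cat leq_addr.
- by rewrite /insert_max take_size_cat // drop_size_cat // hk catA.
Qed.

(* Distinct (w, t) give distinct children: the last n+1 sits at index t. *)
Lemma insert_max_inj n m w1 w2 t1 t2 :
  all (fun x => x <= n) w1 -> all (fun x => x <= n) w2 ->
  t1 <= size w1 -> t2 <= size w2 ->
  insert_max n m w1 t1 = insert_max n m w2 t2 -> w1 = w2 /\ t1 = t2.
Proof.
move=> h1 h2 s1 s2; rewrite /insert_max => /eqP; rewrite eqseq_cat // => /andP [_ /eqP e].
have notin w t : all (fun x => x <= n) w -> n.+1 \notin take t w.
  by move=> hw; apply/negP => /mem_take /(allP hw); rewrite ltnn.
have et : t1 = t2.
  move: (congr1 (index n.+1) e); rewrite !index_cat !(negbTE (notin _ _ _)) //=.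
  by rewrite eqxx !addn0 !size_takel.
subst t2; split => //.
move/eqP: e; rewrite eqseq_cat ?size_takel // => /andP [/eqP ea /eqP [eb]].
by rewrite -(cat_take_drop t1 w1) ea eb cat_take_drop.
Qed.

Definition child_label (m p t : nat) : nat := if t == 0 then m + p else m.-1 + t.

Lemma nonincr_prefix_insert_max n m w t : 0 < m -> all (fun x => x <= n) w ->
  t <= nonincr_prefix w ->
  nonincr_prefix (insert_max n m w t) = child_label m (nonincr_prefix w) t.
Proof.
move=> hm hw ht.
have hw' : all (fun x => x <= n.+1) w by apply/allP => y /(allP hw) /leqW.
have hall : all (fun x => x <= n.+1) (insert_max n m w t).
  by rewrite all_insert_max // hw' leqnn.
rewrite (nonincr_prefix_bounded hall) /insert_max nonincr_prefix_le_nseq /child_label.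
clear hall.
case: t ht => [|t] ht /=.
  by rewrite take0 drop0 /= leqnn -(nonincr_prefix_bounded hw'); lia.
case: w hw hw' ht => [|y w'] //= /andP [hy hw] /andP [hy' hw'].
rewrite ltnS => ht; have hts := leq_trans ht (nonincr_prefix_le_size _ _).
have /andP [hle hdec] : all (fun z => z <= y) (take t w') && nonincr (take t w').
  by rewrite nonincr_prefix_leP.
by rewrite hy' nonincr_prefix_le_cut // ?size_takel //; lia.
Qed.

(* The child labels of p are m + p, m, ..., m + p - 1: a permutation of
   m + j, j <= p. *)
Lemma sum_child_labels m p (f : nat -> nat) : 0 < m ->
  \sum_(t <- iota 0 p.+1) f (child_label m p t) = \sum_(j <- iota 0 p.+1) f (m + j).
Proof.
move=> hm.
have iota_last : iota 0 p.+1 = iota 0 p ++ [:: p] by rewrite -addn1 iotaD.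
rewrite {2}iota_last big_cat big_seq1 /= big_cons /child_label /= addnC; congr (_ + _).
rewrite -(addn0 1) iotaDl big_map; apply: eq_bigr => j _.
by congr f; lia.
Qed.

Fixpoint avoiders (m n : nat) : seq (seq nat) :=
  if n is n'.+1 then
    [seq insert_max n' m w t | w <- avoiders m n', t <- iota 0 (nonincr_prefix w).+1]
  else [:: [::]].

Lemma mem_avoiders m n s : 0 < m -> (s \in avoiders m n) = avoider n m s.
Proof.
move=> hm; elim: n s => [|n IH] s.
  by rewrite /= inE /avoider /is_multiperm; case: s.
apply/allpairsPdep/idP => [[w [t [hw ht ->]]]|hv].
  rewrite IH in hw; rewrite mem_iota add0n ltnS in ht.
  rewrite insert_max_avoider ?hw ?ht ?(avoider_bounded hw) //.
  exact: leq_trans ht (nonincr_prefix_size w).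
have [w [t [hb ht es]]] := avoider_decomp hm hv.
move: hv; rewrite es insert_max_avoider // => /andP [hw htl].
by exists w, t; rewrite IH mem_iota add0n ltnS hw htl.
Qed.

Lemma avoiders_le m n w : 0 < m -> w \in avoiders m n -> all (fun x => x <= n) w.
Proof.
move=> hm; rewrite mem_avoiders // => /avoider_bounded h.
by apply/allP => y /(allP h) /andP [].
Qed.

Lemma avoiders_uniq m n : 0 < m -> uniq (avoiders m n).
Proof.
move=> hm; elim: n => [|n IH] //.
change (uniq [seq insert_max n m w t | w <- avoiders m n, t <- iota 0 (nonincr_prefix w).+1]).
apply: (@allpairs_uniq_dep _ (fun _ => nat) _ (insert_max n m)) => //.
  by move=> w _; apply: iota_uniq.
move=> [w1 t1] [w2 t2] /allpairsPdep [x1 [y1 [hx1 hy1 [-> ->]]]]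
  /allpairsPdep [x2 [y2 [hx2 hy2 [-> ->]]]] /= e.
rewrite !mem_iota /= !add0n !ltnS in hy1 hy2.
have [-> ->] := insert_max_inj (avoiders_le hm hx1) (avoiders_le hm hx2)
  (leq_trans hy1 (nonincr_prefix_size _)) (leq_trans hy2 (nonincr_prefix_size _)) e.
by [].
Qed.

Lemma size_avoiders_grow m k n : 0 < m ->
  \sum_(w <- avoiders m n) tree_count m k (nonincr_prefix w) = size (avoiders m (k + n)).
Proof.
move=> hm; elim: k n => [|k IH] n; first by rewrite /= sum1_size.
rewrite addSnnS -IH.
change (avoiders m n.+1) with
  [seq insert_max n m w t | w <- avoiders m n, t <- iota 0 (nonincr_prefix w).+1].
rewrite big_allpairs_dep /=; apply: eq_big_seq => w hw.
rewrite -sum_child_labels //; apply: eq_big_seq => t.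
rewrite mem_iota add0n ltnS => ht.
by rewrite nonincr_prefix_insert_max // (avoiders_le hm hw).
Qed.

Lemma size_avoiders m n : 0 < m -> size (avoiders m n) = tree_count m n 0.
Proof.
by move=> hm; rewrite -[n]addn0 -size_avoiders_grow // addn0 big_seq1.
Qed.

Lemma lift_letters n (s : seq nat) : all (fun x => 0 < x <= n) s ->
  exists u : seq 'I_n, [seq (val i).+1 | i <- u] = s.
Proof.
elim: s => [|x s IH] /=; first by exists [::].
case/andP => /andP [h0 h1] /IH [u hu].
have hx : x.-1 < n by lia.
by exists (Ordinal hx :: u); rewrite /= hu prednK.
Qed.

Lemma s_nm_avoiders n m : 0 < m ->
  s_nm n m [:: [:: 1; 2; 2]; [:: 1; 2; 3]] = size (avoiders m n).
Proof.
move=> hm; rewrite /s_nm cardE.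
set shift := fun t : (n * m).-tuple 'I_n => [seq (val i).+1 | i <- t].
rewrite -(size_map shift); apply: perm_size; apply: uniq_perm.
- rewrite map_inj_uniq ?enum_uniq // => t1 t2 /= e.
  by apply: val_inj; apply: (inj_map _ e) => i j /= /succn_inj; apply: val_inj.
- exact: avoiders_uniq.
move=> s; rewrite mem_avoiders //; apply/mapP/idP => [[t ht ->]|hv].
  by move: ht; rewrite mem_enum inE avoids_122_123.
have [u hu] := lift_letters (avoider_bounded hv).
have hsz : size u == n * m.
  by case/andP: hv => /andP [/andP [+ _] _] _; rewrite -hu size_map.
exists (Tuple hsz); last by rewrite /shift /= hu.
by rewrite mem_enum inE avoids_122_123 /= hu.
Qed.

Theorem theorem4 (m n : nat) (hm : 1 <= m) :
  (m * n + 1) * s_nm n m [:: [:: 1; 2; 2]; [:: 1; 2; 3]]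
  = 'C((m + 1) * n, n).
Proof. by rewrite s_nm_avoiders // size_avoiders // tree_count_root. Qed.
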